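(* Let $V$ be a real sequence and suppose $(-\Delta+V)\psi=0$ has two linearly independent positive solutions $\psi^+,\psi^-$ on $m\le n\le N$, with $N\ge m+2$, normalized so that $\psi^-_n\psi^+_{n+1}-\psi^-_{n+1}\psi^+_n=1$, and let $G_{jk}=\psi^+_{\min(j,k)}\psi^-_{\max(j,k)}$ be the associated Green matrix. Define $z_n:=\sqrt{G_{nn}}$ for $m\le n\le N$, $$S^{[z]}_n:=\frac{1+\sqrt{1+4z_n^2z_{n-1}^2}}{2z_nz_{n-1}}\quad(m<n\le N),\qquad \varphi^\pm_n:=z_n\prod_{k=m+1}^n\big(S^{[z]}_k\big)^{\pm1}.$$ Then: (1) $\varphi^+,\varphi^-$ are an independent pair of solutions of $(-\Delta+V)\varphi=0$ at all interior points $m<n<N$; (2) $G_{nk}=z_nz_k\prod_{\ell=k+1}^n\frac{1}{S^{[z]}_\ell}$ for $m<k<n\le N$; (3) for $m<n<N$, $\frac12\left(\sqrt{1+4G_{nn}G_{n+1\,n+1}}+\sqrt{1+4G_{nn}G_{n-1\,n-1}}\right)=(2+V_n)G_{nn}$.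
   Context: $(\Delta f)_n=f_{n+1}+f_{n-1}-2f_n$; $(-\Delta+V)\psi=0$ at $n$ means $-\psi_{n+1}-\psi_{n-1}+(2+V_n)\psi_n=0$. *)

From Stdlib Require Import Reals ZArith.
Open Scope R_scope.

(* (-Δ + V) f evaluated at n:  -f_{n+1} - f_{n-1} + (2 + V_n) f_n *)
Definition schr (V f : Z -> R) (n : Z) : R :=
  - f (n + 1)%Z - f (n - 1)%Z + (2 + V n) * f n.

Fixpoint prod_nat (g : nat -> R) (n : nat) : R :=
  match n with
  | O => 1
  | S p => prod_nat g p * g p
  end.

(* prodZ f a b = \prod_{k = a+1}^{b} f k  (empty product = 1 when b <= a) *)
Definition prodZ (f : Z -> R) (a b : Z) : R :=
  prod_nat (fun i => f (a + 1 + Z.of_nat i)%Z) (Z.to_nat (b - a)).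

Definition lin_indep_on (m N : Z) (f g : Z -> R) : Prop :=
  forall a b : R, (forall n, (m <= n <= N)%Z -> a * f n + b * g n = 0) ->
    a = 0 /\ b = 0.

Definition green (pp pm : Z -> R) (j k : Z) : R := pp (Z.min j k) * pm (Z.max j k).

Definition zseq (pp pm : Z -> R) (n : Z) : R := sqrt (green pp pm n n).

Definition Sz (z : Z -> R) (n : Z) : R :=
  (1 + sqrt (1 + 4 * (z n)^2 * (z (n - 1)%Z)^2)) / (2 * z n * z (n - 1)%Z).

Definition phi_plus (z : Z -> R) (m n : Z) : R := z n * prodZ (Sz z) m n.
Definition phi_minus (z : Z -> R) (m n : Z) : R :=
  z n * prodZ (fun k => / Sz z k) m n.

From Stdlib Require Import Reals ZArith Lra Lia.
Open Scope R_scope.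

(* The Wronskian normalization makes every quantity in the theorem explicit in
   psi+ and psi-. For consecutive sites, a := psi-_{n-1} psi+_n and
   b := psi-_n psi+_{n-1} satisfy a - b = 1, so sqrt (1 + 4 a b) = a + b.
   Since z_n^2 z_{n-1}^2 = a b, this gives S_n = a / (z_n z_{n-1}), i.e.
   S_n = (psi+_n / z_n) / (psi+_{n-1} / z_{n-1})
       = (psi-_{n-1} / z_{n-1}) / (psi-_n / z_n).
   The products defining phi+ and phi- therefore telescope, and phi+- are
   nonzero multiples of psi+-; this gives (1) and (2). The same square-root
   identity, combined with the equations for psi+ and psi-, gives (3). *)

Lemma prod_nat_telescope (g h : nat -> R) (k : nat) :
  (forall i, (i < k)%nat -> g i = h (S i) / h i) ->
  (forall i, (i <= k)%nat -> h i <> 0) ->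
  prod_nat g k = h k / h O.
Proof.
  induction k as [|k IH]; intros Hg Hh; simpl.
  - field. apply Hh; lia.
  - rewrite IH by (intros; (apply Hg || apply Hh); lia).
    rewrite Hg by lia. field. split; apply Hh; lia.
Qed.

Lemma prodZ_telescope (f h : Z -> R) (a b : Z) :
  (a <= b)%Z ->
  (forall j, (a < j <= b)%Z -> f j = h j / h (j - 1)%Z) ->
  (forall j, (a <= j <= b)%Z -> h j <> 0) ->
  prodZ f a b = h b / h a.
Proof.
  intros Hab Hf Hh. unfold prodZ.
  rewrite (prod_nat_telescope _ (fun i => h (a + Z.of_nat i)%Z)).
  - replace (a + Z.of_nat (Z.to_nat (b - a)))%Z with b by lia.
    now replace (a + Z.of_nat 0)%Z with a by lia.
  - intros i Hi. rewrite Hf by lia.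
    replace (a + 1 + Z.of_nat i - 1)%Z with (a + Z.of_nat i)%Z by lia.
    now replace (a + 1 + Z.of_nat i)%Z with (a + Z.of_nat (S i))%Z by lia.
  - intros i Hi. apply Hh. lia.
Qed.

Lemma sqrt_1_plus_4_mul (x y : R) :
  x - y = 1 -> 0 <= x -> 0 <= y -> sqrt (1 + 4 * x * y) = x + y.
Proof.
  intros Hxy Hx Hy.
  replace (1 + 4 * x * y) with ((x + y) ^ 2).
  - apply sqrt_pow2. lra.
  - replace 1 with ((x - y) ^ 2) by (rewrite Hxy; ring). ring.
Qed.

Lemma schr_scale_local (V f g : Z -> R) (c : R) (n : Z) :
  (forall j, (n - 1 <= j <= n + 1)%Z -> f j = c * g j) ->
  schr V f n = c * schr V g n.
Proof.
  intros Hfg. unfold schr. rewrite !Hfg by lia. ring.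
Qed.

Lemma lin_indep_on_scale (m N : Z) (f g f' g' : Z -> R) (c d : R) :
  c <> 0 -> d <> 0 ->
  (forall n, (m <= n <= N)%Z -> f' n = c * f n) ->
  (forall n, (m <= n <= N)%Z -> g' n = d * g n) ->
  lin_indep_on m N f g -> lin_indep_on m N f' g'.
Proof.
  intros Hc Hd Hf Hg Hind a b Hab.
  destruct (Hind (a * c) (b * d)) as [Hac Hbd].
  - intros n Hn. rewrite <- (Hab n Hn), Hf, Hg by exact Hn. ring.
  - split; [apply (Rmult_eq_reg_r c) | apply (Rmult_eq_reg_r d)]; lra.
Qed.

Lemma green_diag (pp pm : Z -> R) (n : Z) : green pp pm n n = pp n * pm n.
Proof. unfold green. now rewrite Z.min_id, Z.max_id. Qed.

Section GreenMatrix.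

Variables (psip psim : Z -> R) (m N : Z).
Hypothesis psip_pos : forall n, (m <= n <= N)%Z -> 0 < psip n.
Hypothesis psim_pos : forall n, (m <= n <= N)%Z -> 0 < psim n.
Hypothesis wronskian : forall n, (m <= n < N)%Z ->
  psim n * psip (n + 1)%Z - psim (n + 1)%Z * psip n = 1.

Let G := green psip psim.
Let z := zseq psip psim.

Lemma zseq_pos n : (m <= n <= N)%Z -> 0 < z n.
Proof.
  intros Hn. unfold z, zseq. rewrite green_diag.
  apply sqrt_lt_R0, Rmult_lt_0_compat; auto.
Qed.

Lemma zseq_sqr n : (m <= n <= N)%Z -> z n * z n = psip n * psim n.
Proof.
  intros Hn. unfold z, zseq. rewrite green_diag, sqrt_sqrt; [reflexivity |].
  apply Rlt_le, Rmult_lt_0_compat; auto.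
Qed.

Lemma sqrt_green_diag_succ n : (m <= n < N)%Z ->
  sqrt (1 + 4 * G n n * G (n + 1)%Z (n + 1)%Z)
  = psim n * psip (n + 1)%Z + psim (n + 1)%Z * psip n.
Proof.
  intros Hn. unfold G. rewrite !green_diag.
  replace (1 + 4 * (psip n * psim n) * (psip (n + 1)%Z * psim (n + 1)%Z))
    with (1 + 4 * (psim n * psip (n + 1)%Z) * (psim (n + 1)%Z * psip n))
    by ring.
  apply sqrt_1_plus_4_mul; [now apply wronskian | |];
    apply Rlt_le, Rmult_lt_0_compat; (apply psip_pos || apply psim_pos); lia.
Qed.

Lemma Sz_eq n : (m < n <= N)%Z ->
  Sz z n = psim (n - 1)%Z * psip n / (z n * z (n - 1)%Z).
Proof.
  intros Hn. unfold Sz.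
  pose proof (sqrt_green_diag_succ (n - 1) ltac:(lia)) as Hroot.
  replace (n - 1 + 1)%Z with n in Hroot by lia.
  replace (1 + 4 * z n ^ 2 * z (n - 1)%Z ^ 2)
    with (1 + 4 * G (n - 1)%Z (n - 1)%Z * G n n)
    by (unfold G; rewrite !green_diag, <- !zseq_sqr by lia; fold z; ring).
  rewrite Hroot.
  pose proof (wronskian (n - 1) ltac:(lia)) as Hw.
  replace (n - 1 + 1)%Z with n in Hw by lia.
  pose proof (zseq_pos n ltac:(lia)). pose proof (zseq_pos (n - 1) ltac:(lia)).
  field_simplify_eq; [lra | split; lra].
Qed.

Lemma Sz_ratio_plus n : (m < n <= N)%Z ->
  Sz z n = (psip n / z n) / (psip (n - 1)%Z / z (n - 1)%Z).
Proof.
  intros Hn. rewrite Sz_eq by exact Hn.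
  pose proof (zseq_sqr (n - 1) ltac:(lia)) as Hsq.
  pose proof (zseq_pos n ltac:(lia)). pose proof (zseq_pos (n - 1) ltac:(lia)).
  pose proof (psip_pos (n - 1) ltac:(lia)).
  replace (psim (n - 1)%Z) with (z (n - 1)%Z * z (n - 1)%Z / psip (n - 1)%Z)
    by (rewrite Hsq; field; lra).
  field. lra.
Qed.

Lemma inv_Sz_ratio_minus n : (m < n <= N)%Z ->
  / Sz z n = (psim n / z n) / (psim (n - 1)%Z / z (n - 1)%Z).
Proof.
  intros Hn. rewrite Sz_eq by exact Hn.
  pose proof (zseq_sqr n ltac:(lia)) as Hsq.
  pose proof (zseq_pos n ltac:(lia)). pose proof (zseq_pos (n - 1) ltac:(lia)).
  pose proof (psip_pos n ltac:(lia)). pose proof (psim_pos (n - 1) ltac:(lia)).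
  replace (psim n) with (z n * z n / psip n) by (rewrite Hsq; field; lra).
  field. lra.
Qed.

Lemma prodZ_inv_Sz k n : (m <= k <= n)%Z -> (n <= N)%Z ->
  prodZ (fun l => / Sz z l) k n = (psim n / z n) / (psim k / z k).
Proof.
  intros Hk Hn. apply (prodZ_telescope _ (fun j => psim j / z j)); [lia | |].
  - intros j Hj. apply inv_Sz_ratio_minus. lia.
  - intros j Hj.
    pose proof (zseq_pos j ltac:(lia)). pose proof (psim_pos j ltac:(lia)).
    apply Rgt_not_eq, Rdiv_lt_0_compat; lra.
Qed.

Lemma phi_plus_eq n : (m <= n <= N)%Z -> phi_plus z m n = z m / psip m * psip n.
Proof.
  intros Hn. unfold phi_plus.
  rewrite (prodZ_telescope _ (fun j => psip j / z j)); [| lia | |].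
  - pose proof (zseq_pos n Hn). pose proof (zseq_pos m ltac:(lia)).
    pose proof (psip_pos m ltac:(lia)). field. lra.
  - intros j Hj. apply Sz_ratio_plus. lia.
  - intros j Hj.
    pose proof (zseq_pos j ltac:(lia)). pose proof (psip_pos j ltac:(lia)).
    apply Rgt_not_eq, Rdiv_lt_0_compat; lra.
Qed.

Lemma phi_minus_eq n : (m <= n <= N)%Z -> phi_minus z m n = z m / psim m * psim n.
Proof.
  intros Hn. unfold phi_minus. rewrite prodZ_inv_Sz by lia.
  pose proof (zseq_pos n Hn). pose proof (zseq_pos m ltac:(lia)).
  pose proof (psim_pos m ltac:(lia)). field. lra.
Qed.

Lemma green_below_diag n k : (m <= k < n)%Z -> (n <= N)%Z ->
  G n k = z n * z k * prodZ (fun l => / Sz z l) k n.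
Proof.
  intros Hk Hn. rewrite prodZ_inv_Sz by lia.
  unfold G, green. rewrite Z.min_r, Z.max_l by lia.
  pose proof (zseq_sqr k ltac:(lia)) as Hsq.
  pose proof (zseq_pos n ltac:(lia)). pose proof (zseq_pos k ltac:(lia)).
  pose proof (psim_pos k ltac:(lia)).
  replace (psip k) with (z k * z k / psim k) by (rewrite Hsq; field; lra).
  field. lra.
Qed.

Variable V : Z -> R.
Hypothesis psip_sol : forall n, (m < n < N)%Z -> schr V psip n = 0.
Hypothesis psim_sol : forall n, (m < n < N)%Z -> schr V psim n = 0.

Lemma green_diag_equation n : (m < n < N)%Z ->
  / 2 * (sqrt (1 + 4 * G n n * G (n + 1)%Z (n + 1)%Z)
         + sqrt (1 + 4 * G n n * G (n - 1)%Z (n - 1)%Z))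
  = (2 + V n) * G n n.
Proof.
  intros Hn.
  rewrite sqrt_green_diag_succ by lia.
  pose proof (sqrt_green_diag_succ (n - 1) ltac:(lia)) as Hprev.
  replace (n - 1 + 1)%Z with n in Hprev by lia.
  replace (4 * G n n * G (n - 1)%Z (n - 1)%Z)
    with (4 * G (n - 1)%Z (n - 1)%Z * G n n) by ring.
  rewrite Hprev.
  pose proof (psip_sol n Hn) as Hp. pose proof (psim_sol n Hn) as Hm.
  unfold schr in Hp, Hm.
  unfold G. rewrite green_diag.
  replace (psim (n + 1)%Z) with ((2 + V n) * psim n - psim (n - 1)%Z) by lra.
  replace (psip (n + 1)%Z) with ((2 + V n) * psip n - psip (n - 1)%Z) by lra.
  field.
Qed.

End GreenMatrix.

Theorem theorem8 (V psip psim : Z -> R) (m N : Z) :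
  (m + 2 <= N)%Z ->
  (forall n, (m < n < N)%Z -> schr V psip n = 0) ->
  (forall n, (m < n < N)%Z -> schr V psim n = 0) ->
  (forall n, (m <= n <= N)%Z -> 0 < psip n) ->
  (forall n, (m <= n <= N)%Z -> 0 < psim n) ->
  lin_indep_on m N psip psim ->
  (forall n, (m <= n < N)%Z ->
     psim n * psip (n + 1)%Z - psim (n + 1)%Z * psip n = 1) ->
  let G := green psip psim in
  let z := zseq psip psim in
  let S := Sz z in
  let phip := phi_plus z m in
  let phim := phi_minus z m in
  ((forall n, (m < n < N)%Z -> schr V phip n = 0 /\ schr V phim n = 0) /\
   lin_indep_on m N phip phim) /\
  (forall n k, (m < k < n)%Z -> (n <= N)%Z ->
     G n k = z n * z k * prodZ (fun l => / S l) k n) /\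
  (forall n, (m < n < N)%Z ->
     / 2 * (sqrt (1 + 4 * G n n * G (n + 1)%Z (n + 1)%Z)
            + sqrt (1 + 4 * G n n * G (n - 1)%Z (n - 1)%Z))
     = (2 + V n) * G n n).
Proof.
  intros HN psip_sol psim_sol psip_pos psim_pos Hind wronskian; cbv zeta.
  pose proof (zseq_pos psip psim m N psip_pos psim_pos m ltac:(lia)) as Hzm.
  pose proof (psip_pos m ltac:(lia)). pose proof (psim_pos m ltac:(lia)).
  pose proof (phi_plus_eq psip psim m N psip_pos psim_pos wronskian) as Hphip.
  pose proof (phi_minus_eq psip psim m N psip_pos psim_pos wronskian) as Hphim.
  split; [split | split].
  - intros n Hn.
    rewrite (schr_scale_local V (phi_plus (zseq psip psim) m) psip
               (zseq psip psim m / psip m)),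
      (schr_scale_local V (phi_minus (zseq psip psim) m) psim
         (zseq psip psim m / psim m)),
      psip_sol, psim_sol by (intros; try apply Hphip; try apply Hphim; lia).
    split; ring.
  - apply (lin_indep_on_scale m N psip psim _ _
      (zseq psip psim m / psip m) (zseq psip psim m / psim m)); auto;
      apply Rgt_not_eq, Rdiv_lt_0_compat; assumption.
  - intros n k Hk Hn.
    apply (green_below_diag psip psim m N psip_pos psim_pos wronskian); lia.
  - exact (green_diag_equation psip psim m N psip_pos psim_pos wronskian
      V psip_sol psim_sol).
Qed.
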